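(* Fix $e\in -\mathrm{int}(C)$ and define $v_e:\mathcal P^0_{\mp C}(Y)\to\overline{\mathbb R}^2$ by $v_e(A)=w_e(\{0\},A)=\big(-G^\ell_e(\{0\},A),\,G^u_e(A,\{0\})\big)$. Then $v_e$ is $s$-increasing on $\mathcal P^0_{\mp C}(Y)$, strictly $s$-increasing on the family of $\mp C$-compact sets in $\mathcal P^0_{\mp C}(Y)$, and for $A,B\in\mathcal P^0_{\mp C}(Y)$ with $A\in[B]^s$ one has $v_e(A)=v_e(B)$.
   Context: $Y$ is a real topological linear space and $C\subset Y$ is a convex, closed, pointed cone with nonempty interior. $\mathbb R^2$ is ordered by $\mathbb R^2_+$ ($a\le b$ iff $b-a\in\mathbb R^2_+$, $a<b$ iff $b-a\in\mathrm{int}\,\mathbb R^2_+$). $\mathcal P^0_{\mp C}(Y)$ is the family of nonempty $A\subset Y$ with $A+C\neq Y$ and $A-C\neq Y$. $C$-compact: every cover by sets $U_\alpha+C$, $U_\alpha$ open, has a finite subcover; $\mp C$-compact: $C$-compact and $-C$-compact. $A\preceq^s B$ iff $B\subset A+C$ and $A\subset B-C$; $A\prec^s B$ iff $B\subset A+\mathrm{int}C$ and $A\subset B-\mathrm{int}C$; $[A]^s$ is the class of $A$ under $A\sim^s B\iff (A\preceq^sB\text{ and }B\preceq^sA)$. $\phi_{e,A}(y)=\inf\{t\in\mathbb R: y\in te+A+C\}$; $G^\ell_e(A,B)=\sup_{b\in B}\phi_{e,A}(b)$; $G^u_e(B,A):=-G^\ell_e(-B,-A)$; $w_e(A,B)=(-G^\ell_e(A,B),G^u_e(B,A))$.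 A map $T$ is $s$-increasing on $\mathcal A$ if $A,B\in\mathcal A$, $A\preceq^sB$ imply $T(A)\le_{\mathbb R^2_+}T(B)$; strictly $s$-increasing if $A\prec^sB$ implies $T(A)<_{\mathbb R^2_+}T(B)$. *)

From Stdlib Require Import Reals List ClassicalEpsilon.
Open Scope R_scope.

Record TLS := {
  car :> Type;
  vzero : car;
  vadd : car -> car -> car;
  vopp : car -> car;
  vscal : R -> car -> car;
  vaddA : forall x y z, vadd x (vadd y z) = vadd (vadd x y) z;
  vaddC : forall x y, vadd x y = vadd y x;
  vadd0 : forall x, vadd x vzero = x;
  vaddN : forall x, vadd x (vopp x) = vzero;
  vscal1 : forall x, vscal 1 x = x;
  vscalA : forall a b x, vscal a (vscal b x) = vscal (a * b) x;
  vscalDr : forall a x y, vscal a (vadd x y) = vadd (vscal a x) (vscal a y);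
  vscalDl : forall a b x, vscal (a + b) x = vadd (vscal a x) (vscal b x);
  is_open : (car -> Prop) -> Prop;
  open_full : is_open (fun _ => True);
  open_union : forall (I : Type) (F : I -> car -> Prop),
      (forall i, is_open (F i)) -> is_open (fun x => exists i, F i x);
  open_inter : forall U V, is_open U -> is_open V -> is_open (fun x => U x /\ V x);
  vadd_cont : forall U x y, is_open U -> U (vadd x y) ->
      exists V W, is_open V /\ is_open W /\ V x /\ W y /\
        forall x' y', V x' -> W y' -> U (vadd x' y');
  vscal_cont : forall U t x, is_open U -> U (vscal t x) ->
      exists eps V, 0 < eps /\ is_open V /\ V x /\
        forall s x', Rabs (s - t) < eps -> V x' -> U (vscal s x')
}.

Arguments vzero {_}.
Arguments vadd {_}.
Arguments vopp {_}.
Arguments vscal {_}.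
Arguments is_open {_}.

Section Sets.
Context {Y : TLS}.
Definition set := Y -> Prop.

Definition set_incl (A B : set) : Prop := forall y, A y -> B y.
Definition set_add (A B : set) : set :=
  fun y => exists a b, A a /\ B b /\ y = vadd a b.
Definition set_opp (A : set) : set := fun y => exists a, A a /\ y = vopp a.
Definition set_sub (A B : set) : set := set_add A (set_opp B).
Definition set_single (x : Y) : set := fun y => y = x.
Definition is_whole (A : set) : Prop := forall y, A y.

Definition set_int (A : set) : set :=
  fun x => exists U, is_open U /\ U x /\ set_incl U A.

Definition is_cone (C : set) : Prop :=
  forall t x, 0 <= t -> C x -> C (vscal t x).
Definition is_convex (C : set) : Prop :=
  forall t x y, 0 <= t <= 1 -> C x -> C y -> C (vadd (vscal t x) (vscal (1 - t) y)).
Definition is_closed_set (C : set) : Prop := is_open (fun x => ~ C x).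
Definition is_pointed (C : set) : Prop :=
  forall x, C x -> C (vopp x) -> x = vzero.
Definition good_cone (C : set) : Prop :=
  is_cone C /\ is_convex C /\ is_closed_set C /\ is_pointed C /\
  exists x, set_int C x.

Definition P0 (C A : set) : Prop :=
  (exists a, A a) /\ ~ is_whole (set_add A C) /\ ~ is_whole (set_sub A C).

Definition K_compact (K A : set) : Prop :=
  forall (I : Type) (U : I -> set),
    (forall i, is_open (U i)) ->
    set_incl A (fun y => exists i, set_add (U i) K y) ->
    exists l : list I, set_incl A (fun y => exists i, In i l /\ set_add (U i) K y).
Definition C_compact (C A : set) : Prop := K_compact C A.
Definition mpC_compact (C A : set) : Prop :=
  K_compact C A /\ K_compact (set_opp C) A.

Definition set_le_s (C A B : set) : Prop :=
  set_incl B (set_add A C) /\ set_incl A (set_sub B C).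
Definition set_lt_s (C A B : set) : Prop :=
  set_incl B (set_add A (set_int C)) /\ set_incl A (set_sub B (set_int C)).
Definition s_equiv (C A B : set) : Prop := set_le_s C A B /\ set_le_s C B A.
Definition s_class (C A : set) : set -> Prop := fun B => s_equiv C A B.
End Sets.

Inductive Rbar := Finite (r : R) | p_infty | m_infty.

Definition Rbar_le (x y : Rbar) : Prop :=
  match x, y with
  | m_infty, _ => True
  | _, p_infty => True
  | Finite a, Finite b => a <= b
  | _, _ => False
  end.
Definition Rbar_lt (x y : Rbar) : Prop := Rbar_le x y /\ x <> y.
Definition Rbar_opp (x : Rbar) : Rbar :=
  match x with Finite a => Finite (- a) | p_infty => m_infty | m_infty => p_infty end.

Definition Rbar_is_glb (S : Rbar -> Prop) (v : Rbar) : Prop :=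
  (forall s, S s -> Rbar_le v s) /\ (forall w, (forall s, S s -> Rbar_le w s) -> Rbar_le w v).
Definition Rbar_is_lub (S : Rbar -> Prop) (v : Rbar) : Prop :=
  (forall s, S s -> Rbar_le s v) /\ (forall w, (forall s, S s -> Rbar_le s w) -> Rbar_le v w).
(* infimum / supremum in the complete lattice Rbar (inf of empty = +oo, sup of empty = -oo) *)
Definition Rbar_inf (S : Rbar -> Prop) : Rbar := epsilon (inhabits p_infty) (Rbar_is_glb S).
Definition Rbar_sup (S : Rbar -> Prop) : Rbar := epsilon (inhabits m_infty) (Rbar_is_lub S).

Definition pair_le (a b : Rbar * Rbar) : Prop :=
  Rbar_le (fst a) (fst b) /\ Rbar_le (snd a) (snd b).
Definition pair_lt (a b : Rbar * Rbar) : Prop :=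
  Rbar_lt (fst a) (fst b) /\ Rbar_lt (snd a) (snd b).

Section Scal.
Context {Y : TLS}.
Definition phi (C : @set Y) (e : Y) (A : set) (y : Y) : Rbar :=
  Rbar_inf (fun v => exists t : R, v = Finite t /\
      exists a c, A a /\ C c /\ y = vadd (vadd (vscal t e) a) c).
Definition Gl (C : @set Y) (e : Y) (A B : set) : Rbar :=
  Rbar_sup (fun v => exists b, B b /\ v = phi C e A b).
Definition Gu (C : @set Y) (e : Y) (B A : set) : Rbar :=
  Rbar_opp (Gl C e (set_opp B) (set_opp A)).
Definition w_e (C : @set Y) (e : Y) (A B : set) : Rbar * Rbar :=
  (Rbar_opp (Gl C e A B), Gu C e B A).
Definition v_e (C : @set Y) (e : Y) (A : set) : Rbar * Rbar :=
  w_e C e (set_single vzero) A.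
End Scal.

(* Write [e = - k] with [k] interior to [C], and let [h y = inf {t | y + t k ∈ C}]
   be the time at which the ray from [y] in direction [k] enters [C]. Then
   [v_e A = (- sup_{a ∈ A} h a, - inf_{a ∈ A} h a)]. If [B ⊆ A + C], every point of
   [B] enters [C] no later than some point of [A], so the supremum decreases; if
   [A ⊆ B - C], every entry time of [A] is also one of [B], so the infimum
   decreases. This gives monotonicity, and equality on [s]-equivalence classes by
   antisymmetry. When the inclusions go into [A + int C] and [B - int C], each
   point gains a positive margin in entry time, and [∓C]-compactness makes the
   margin uniform through a finite subcover. *)

From Stdlib Require Import Reals Lra Lia List ClassicalEpsilon Classical FunctionalExtensionality PropExtensionality.
Open Scope R_scope.

Lemma Rbar_le_refl x : Rbar_le x x.
Proof. destruct x; simpl; auto; lra. Qed.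

Lemma Rbar_le_trans x y z : Rbar_le x y -> Rbar_le y z -> Rbar_le x z.
Proof. destruct x, y, z; simpl; auto; try tauto; lra. Qed.

Lemma Rbar_le_antisym x y : Rbar_le x y -> Rbar_le y x -> x = y.
Proof. destruct x, y; simpl; try tauto; intros; f_equal; lra. Qed.

Lemma Rbar_le_lt_trans x y z : Rbar_le x y -> Rbar_lt y z -> Rbar_lt x z.
Proof.
  unfold Rbar_lt; destruct x as [a| |], y as [b| |], z as [c| |]; simpl;
    intros H1 [H2 H3]; split; try tauto; try discriminate; try lra;
    intros E; injection E as E; subst; apply H3; f_equal; lra.
Qed.

Lemma Rbar_lt_finite_le r p x : r < p -> Rbar_le (Finite p) x -> Rbar_lt (Finite r) x.
Proof.
  unfold Rbar_lt; destruct x as [a| |]; simpl; intros H1 H2; split; try lra; try discriminate.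
  intros E; injection E; lra.
Qed.

Lemma Rbar_opp_le x y : Rbar_le x y -> Rbar_le (Rbar_opp y) (Rbar_opp x).
Proof. destruct x, y; simpl; auto; lra. Qed.

Lemma Rbar_opp_involutive x : Rbar_opp (Rbar_opp x) = x.
Proof. destruct x; simpl; auto; f_equal; lra. Qed.

Lemma Rbar_opp_lt x y : Rbar_lt x y -> Rbar_lt (Rbar_opp y) (Rbar_opp x).
Proof.
  intros [Hle Hne]; split; [now apply Rbar_opp_le|].
  intros E; apply Hne; rewrite <- (Rbar_opp_involutive x), <- E; apply Rbar_opp_involutive.
Qed.

Lemma pair_le_antisym p q : pair_le p q -> pair_le q p -> p = q.
Proof.
  destruct p, q; intros [H1 H2] [H3 H4]; simpl in *.
  f_equal; now apply Rbar_le_antisym.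
Qed.

Lemma Rbar_glb_ex (S : Rbar -> Prop) : exists v, Rbar_is_glb S v.
Proof.
  destruct (classic (S m_infty)) as [Sm|Sm].
  { exists m_infty; split; [now intros|]. intros w Hw; now apply Hw. }
  destruct (classic (exists r, S (Finite r))) as [[r0 Sr0]|Sfin].
  2:{ exists p_infty; split.
      - intros [r| |] Hs; simpl; auto. apply Sfin; eauto.
      - now intros [] _. }
  destruct (classic (exists m, forall r, S (Finite r) -> m <= r)) as [[m Hm]|Hunb].
  - set (E := fun x => S (Finite (- x))).
    assert (Eb : bound E) by (exists (- m); intros x Ex; specialize (Hm _ Ex); lra).
    assert (Ene : exists x, E x) by (exists (- r0); unfold E; now rewrite Ropp_involutive).
    destruct (completeness E Eb Ene) as [l [Hub Hlub]].
    exists (Finite (- l)); split.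
    + intros [r| |] Hs; simpl; auto.
      assert (E (- r)) as Er by (unfold E; now rewrite Ropp_involutive).
      specialize (Hub _ Er); lra.
    + intros [x| |] Hw; simpl; auto.
      * assert (l <= - x) by (apply Hlub; intros y Ey; specialize (Hw _ Ey); simpl in Hw; lra).
        lra.
      * exact (Hw _ Sr0).
  - exists m_infty; split; [now intros|].
    intros [x| |] Hw; simpl; auto.
    + apply Hunb; exists x; intros r Sr; exact (Hw _ Sr).
    + exact (Hw _ Sr0).
Qed.

Lemma Rbar_lub_ex (S : Rbar -> Prop) : exists v, Rbar_is_lub S v.
Proof.
  destruct (Rbar_glb_ex (fun x => S (Rbar_opp x))) as [v [Hlb Hglb]].
  exists (Rbar_opp v); split.
  - intros s Hs. rewrite <- (Rbar_opp_involutive s). apply Rbar_opp_le, Hlb.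
    now rewrite Rbar_opp_involutive.
  - intros w Hw. rewrite <- (Rbar_opp_involutive w). apply Rbar_opp_le, Hglb.
    intros s Hs. rewrite <- (Rbar_opp_involutive s). now apply Rbar_opp_le, Hw.
Qed.

Lemma Rbar_inf_lb S s : S s -> Rbar_le (Rbar_inf S) s.
Proof. apply (epsilon_spec _ _ (Rbar_glb_ex S)). Qed.

Lemma Rbar_inf_glb S w : (forall s, S s -> Rbar_le w s) -> Rbar_le w (Rbar_inf S).
Proof. apply (epsilon_spec _ _ (Rbar_glb_ex S)). Qed.

Lemma Rbar_sup_ub S s : S s -> Rbar_le s (Rbar_sup S).
Proof. apply (epsilon_spec _ _ (Rbar_lub_ex S)). Qed.

Lemma Rbar_sup_lub S w : (forall s, S s -> Rbar_le s w) -> Rbar_le (Rbar_sup S) w.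
Proof. apply (epsilon_spec _ _ (Rbar_lub_ex S)). Qed.

Lemma Rbar_sup_singleton (S : Rbar -> Prop) x :
  S x -> (forall s, S s -> s = x) -> Rbar_sup S = x.
Proof.
  intros Sx Huniq. apply Rbar_le_antisym; [|now apply Rbar_sup_ub].
  apply Rbar_sup_lub; intros s Ss; rewrite (Huniq s Ss); apply Rbar_le_refl.
Qed.

Lemma Rbar_inf_lt S r :
  ~ Rbar_le (Finite r) (Rbar_inf S) -> exists s, S s /\ ~ Rbar_le (Finite r) s.
Proof.
  intros H. apply NNPP; intros Hno. apply H, Rbar_inf_glb; intros s Ss.
  apply NNPP; intros Hs. apply Hno; eauto.
Qed.
Section VectorAlgebra.
Variable Y : TLS.
Implicit Types x y z w : Y.

Lemma vadd0l x : vadd vzero x = x.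
Proof. rewrite vaddC; apply vadd0. Qed.

Lemma vaddNl x : vadd (vopp x) x = vzero.
Proof. rewrite vaddC; apply vaddN. Qed.

Lemma vadd_cancel x y z : vadd x y = vadd x z -> y = z.
Proof. intros H. now rewrite <- (vadd0l y), <- (vadd0l z), <- (vaddNl x), <- !vaddA, H. Qed.

Lemma vadd_eq_sub x y z : x = vadd y z -> z = vadd x (vopp y).
Proof. intros ->. now rewrite (vaddC _ y z), <- vaddA, vaddN, vadd0. Qed.

Lemma vscal0l x : vscal 0 x = vzero.
Proof. apply (vadd_cancel (vscal 0 x)). rewrite <- vscalDl, vadd0. f_equal; ring. Qed.

Lemma vscal0r r : vscal r (@vzero Y) = vzero.
Proof. apply (vadd_cancel (vscal r vzero)). now rewrite <- vscalDr, !vadd0. Qed.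

Lemma vscalN1 x : vscal (-1) x = vopp x.
Proof.
  apply (vadd_cancel x). rewrite vaddN. rewrite <- (vscal1 _ x) at 1.
  rewrite <- vscalDl. replace (1 + -1) with 0 by ring. apply vscal0l.
Qed.

Lemma vaddACA x y z w : vadd (vadd x y) (vadd z w) = vadd (vadd x z) (vadd y w).
Proof. rewrite <- !vaddA. f_equal. rewrite !vaddA. f_equal. apply vaddC. Qed.

(* Identities between linear combinations are decided by reflection: an
   expression over atoms [env] denotes [lin env (coef e)], so two expressions
   are equal as soon as their coefficients agree, which [field] checks. *)
Inductive vexpr :=
  | VAtom (n : nat) | VZero | VAdd (a b : vexpr) | VOpp (a : vexpr) | VScal (r : R) (a : vexpr).

Fixpoint vdenote (env : list Y) (e : vexpr) : Y :=
  match e with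
  | VAtom n => nth n env vzero
  | VZero => vzero
  | VAdd a b => vadd (vdenote env a) (vdenote env b)
  | VOpp a => vopp (vdenote env a)
  | VScal r a => vscal r (vdenote env a)
  end.

Fixpoint coef (e : vexpr) (i : nat) : R :=
  match e with
  | VAtom n => if Nat.eqb n i then 1 else 0
  | VZero => 0
  | VAdd a b => coef a i + coef b i
  | VOpp a => - coef a i
  | VScal r a => r * coef a i
  end.

Fixpoint lin (env : list Y) (f : nat -> R) : Y :=
  match env with
  | nil => vzero
  | x :: env' => vadd (vscal (f O) x) (lin env' (fun i => f (S i)))
  end.

Lemma lin_ext env : forall f g,
  (forall i, (i < length env)%nat -> f i = g i) -> lin env f = lin env g.
Proof.
  induction env as [|x env IH]; intros f g H; simpl; auto.
  rewrite (H O) by (simpl; lia). f_equal. apply IH. intros i Hi. apply H. simpl; lia.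
Qed.

Lemma lin_add env : forall f g, lin env (fun i => f i + g i) = vadd (lin env f) (lin env g).
Proof.
  induction env as [|x env IH]; intros f g; simpl; [now rewrite vadd0|].
  rewrite vscalDl, (IH (fun i => f (S i)) (fun i => g (S i))). apply vaddACA.
Qed.

Lemma lin_scal env : forall r f, lin env (fun i => r * f i) = vscal r (lin env f).
Proof.
  induction env as [|x env IH]; intros r f; simpl; [now rewrite vscal0r|].
  now rewrite vscalDr, vscalA, (IH r (fun i => f (S i))).
Qed.

Lemma lin_opp env f : lin env (fun i => - f i) = vopp (lin env f).
Proof. rewrite <- vscalN1, <- lin_scal. apply lin_ext; intros; ring. Qed.

Lemma lin_zero env : lin env (fun _ => 0) = vzero.
Proof. induction env as [|x env IH]; simpl; auto. now rewrite IH, vscal0l, vadd0. Qed.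

Lemma lin_atom env : forall n, lin env (fun i => if Nat.eqb n i then 1 else 0) = nth n env vzero.
Proof.
  induction env as [|x env IH]; intros [|n]; simpl; auto.
  - now rewrite vscal1, lin_zero, vadd0.
  - rewrite vscal0l, vadd0l. apply IH.
Qed.

Lemma vdenote_lin env e : vdenote env e = lin env (coef e).
Proof.
  induction e; simpl.
  - symmetry; apply lin_atom.
  - symmetry; apply lin_zero.
  - now rewrite IHe1, IHe2, <- lin_add.
  - now rewrite IHe, <- lin_opp.
  - now rewrite IHe, <- lin_scal.
Qed.

Fixpoint all_below (n : nat) (P : nat -> Prop) : Prop :=
  match n with O => True | S m => all_below m P /\ P m end.

Lemma all_below_spec n P : all_below n P -> forall i, (i < n)%nat -> P i.
Proof.
  induction n as [|n IH]; simpl; intros H i Hi; [lia|]. destruct H as [H1 H2].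
  destruct (Nat.eq_dec i n); [now subst|]. apply IH; auto; lia.
Qed.

Lemma vdenote_eq env e1 e2 :
  all_below (length env) (fun i => coef e1 i = coef e2 i) -> vdenote env e1 = vdenote env e2.
Proof. intros H. rewrite !vdenote_lin. apply lin_ext, all_below_spec, H. Qed.

End VectorAlgebra.

Ltac vlookup x l :=
  lazymatch l with
  | x :: _ => constr:(O)
  | _ :: ?t => let n := vlookup x t in constr:(S n)
  end.

Ltac vatoms t acc :=
  lazymatch t with
  | @vzero _ => acc
  | @vadd _ ?a ?b => let acc1 := vatoms a acc in vatoms b acc1
  | @vopp _ ?a => vatoms a acc
  | @vscal _ _ ?a => vatoms a acc
  | _ => match constr:(tt) with
         | _ => let _ := vlookup t acc in acc
         | _ => constr:(t :: acc)
         end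
  end.

Ltac vreify env t :=
  lazymatch t with
  | @vzero _ => constr:(VZero)
  | @vadd _ ?a ?b => let ra := vreify env a in let rb := vreify env b in constr:(VAdd ra rb)
  | @vopp _ ?a => let ra := vreify env a in constr:(VOpp ra)
  | @vscal _ ?r ?a => let ra := vreify env a in constr:(VScal r ra)
  | _ => let n := vlookup t env in constr:(VAtom n)
  end.

Ltac vsolve :=
  lazymatch goal with
  | |- @eq (car ?Y) ?L ?R =>
    let env := vatoms R ltac:(vatoms L constr:(@nil (car Y))) in
    let eL := vreify env L in
    let eR := vreify env R in
    change (vdenote Y env eL = vdenote Y env eR); apply vdenote_eq; simpl;
    repeat split; field; auto
  end.


Section Topology.
Variable Y : TLS.
Implicit Types (U V : @set Y) (x y : Y).

Lemma open_of_local U :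
  (forall x, U x -> exists V, is_open V /\ V x /\ set_incl V U) -> is_open U.
Proof.
  intros H.
  assert (E : U = fun x => exists i : {V : set | is_open V /\ set_incl V U}, proj1_sig i x).
  { apply functional_extensionality; intros x; apply propositional_extensionality; split.
    - intros Ux. destruct (H x Ux) as [V [HV [Vx HVU]]]. now exists (exist _ V (conj HV HVU)).
    - intros [i Vx]. exact (proj2 (proj2_sig i) x Vx). }
  rewrite E. apply open_union. intros i; exact (proj1 (proj2_sig i)).
Qed.

Lemma open_exists (I : Type) (P : I -> Prop) (F : I -> set) :
  (forall i, is_open (F i)) -> is_open (fun x => exists i, P i /\ F i x).
Proof.
  intros HF. apply open_of_local. intros x [i [Pi Fx]].
  exists (F i); repeat split; auto. intros y Fy; eauto.
Qed.

Lemma open_preimage_affine U r w :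
  is_open U -> is_open (fun x => U (vadd (vscal r x) w)).
Proof.
  intros HU. apply open_of_local; intros x Ux.
  destruct (vadd_cont _ U _ _ HU Ux) as [V [W [HV [HW [Vrx [Ww HVW]]]]]].
  destruct (vscal_cont _ V r x HV Vrx) as [eps [V' [Heps [HV' [V'x HV'V]]]]].
  exists V'; repeat split; auto. intros y V'y. apply HVW; auto.
  apply HV'V; auto. now rewrite Rminus_diag, Rabs_R0.
Qed.

Lemma open_translate U w : is_open U -> is_open (fun x => U (vadd x w)).
Proof.
  intros HU. replace (fun x => U (vadd x w)) with (fun x => U (vadd (vscal 1 x) w)).
  - now apply open_preimage_affine.
  - apply functional_extensionality; intros x; now rewrite vscal1.
Qed.

Lemma open_ray U x y : is_open U -> U x ->
  exists eps, 0 < eps /\ forall s, Rabs s < eps -> U (vadd x (vscal s y)).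
Proof.
  intros HU Ux.
  assert (U (vadd (vscal 0 y) x)) as U0 by now rewrite vscal0l, vadd0l.
  destruct (vadd_cont _ U _ _ HU U0) as [V [W [HV [HW [V0 [Wx HVW]]]]]].
  destruct (vscal_cont _ V 0 y HV V0) as [eps [V' [Heps [HV' [V'y HV'V]]]]].
  exists eps; split; auto. intros s Hs. rewrite vaddC. apply HVW; auto.
  apply HV'V; auto. now rewrite Rminus_0_r.
Qed.

Lemma open_int U : is_open (set_int U).
Proof.
  apply open_of_local. intros x [V [HV [Vx HVU]]].
  exists V; repeat split; auto. intros y Vy. now exists V.
Qed.

Lemma int_incl U x : set_int U x -> U x.
Proof. now intros [V [_ [Vx HVU]]]; apply HVU. Qed.

Lemma int_shift_neg U x y : set_int U x -> exists t, t < 0 /\ set_int U (vadd x (vscal t y)).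
Proof.
  intros Ux. destruct (open_ray (set_int U) x y (open_int U) Ux) as [eps [Heps Hray]].
  exists (- (eps / 2)); split; [lra|]. apply Hray. rewrite Rabs_Ropp, Rabs_right; lra.
Qed.

End Topology.

Lemma fold_Rmax_ge x0 x l : In x l -> x <= fold_right Rmax x0 l.
Proof.
  induction l as [|a l IH]; simpl; [tauto|]. intros [->|Hx].
  - apply Rmax_l.
  - eapply Rle_trans; [now apply IH|apply Rmax_r].
Qed.

Lemma fold_Rmax_stable (P : R -> Prop) x0 l :
  P x0 -> (forall x, In x l -> P x) -> P (fold_right Rmax x0 l).
Proof.
  induction l as [|a l IH]; simpl; intros P0 Pl; auto.
  apply Rmax_case; auto.
Qed.

(* The largest parameter of a finite subcover does the job. *)
Lemma K_compact_monotone_cover {Y : TLS} (K A : @set Y) (U : R -> set) (P : R -> Prop) :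
  K_compact K A -> (exists a, A a) -> (forall t, is_open (U t)) ->
  (forall s t, s <= t -> set_incl (U s) (U t)) ->
  (forall a, A a -> exists t, P t /\ set_add (U t) K a) ->
  exists T, P T /\ set_incl A (set_add (U T) K).
Proof.
  intros HK [a0 Aa0] HU Umono Hcov.
  destruct (HK {t | P t} (fun i => U (proj1_sig i))) as [l Hl].
  - intros i; apply HU.
  - intros a Aa. destruct (Hcov a Aa) as [t [Pt Ha]]. now exists (exist _ t Pt).
  - destruct (Hcov a0 Aa0) as [t0 [Pt0 _]].
    exists (fold_right Rmax t0 (map (@proj1_sig _ _) l)). split.
    + apply fold_Rmax_stable; auto.
      intros x Hx. apply in_map_iff in Hx as [i [<- _]]. apply proj2_sig.
    + intros a Aa. destruct (Hl a Aa) as [i [Hi [u [c [Uu [Kc ->]]]]]].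
      exists u, c; repeat split; auto.
      apply (Umono (proj1_sig i)); auto. now apply fold_Rmax_ge, in_map.
Qed.

Section ConvexCone.
Variable Y : TLS.
Variable C : @set Y.
Hypothesis Ccone : is_cone C.
Hypothesis Cconvex : is_convex C.
Implicit Types (A B : @set Y) (x y z : Y).

Lemma cone_add x y : C x -> C y -> C (vadd x y).
Proof.
  intros Cx Cy.
  replace (vadd x y) with (vscal 2 (vadd (vscal (1 / 2) x) (vscal (1 - 1 / 2) y))) by vsolve.
  apply Ccone; [lra|]. apply Cconvex; auto; lra.
Qed.

Lemma int_cone_add x z : C x -> set_int C z -> set_int C (vadd x z).
Proof.
  intros Cx [U [HU [Uz HUC]]].
  exists (fun w => U (vadd w (vopp x))); repeat split.
  - now apply open_translate.
  - now replace (vadd (vadd x z) (vopp x)) with z by vsolve.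
  - intros w Uw. replace w with (vadd x (vadd w (vopp x))) by vsolve.
    apply cone_add; auto.
Qed.

Variable k : Y.
Hypothesis Ck : set_int C k.

Lemma cone_zero : C vzero.
Proof. rewrite <- (vscal0l _ k). apply Ccone; [lra|]. now apply int_incl. Qed.

Lemma shift_cone_up x s t : s <= t -> C (vadd x (vscal s k)) -> C (vadd x (vscal t k)).
Proof.
  intros Hst Cs.
  replace (vadd x (vscal t k)) with (vadd (vscal (t - s) k) (vadd x (vscal s k))) by vsolve.
  apply cone_add; auto. apply Ccone; [lra|]. now apply int_incl.
Qed.

Lemma shift_int_up x s t : s <= t -> set_int C (vadd x (vscal s k)) -> set_int C (vadd x (vscal t k)).
Proof.
  intros Hst Cs.
  replace (vadd x (vscal t k)) with (vadd (vscal (t - s) k) (vadd x (vscal s k))) by vsolve.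
  apply int_cone_add; auto. apply Ccone; [lra|]. now apply int_incl.
Qed.

(* An interior point of a cone is absorbing: [k + s y] stays in [C] for small
   [s > 0], hence [y + k / s] lies in [C]. *)
Lemma shift_cone_ex y : exists t, C (vadd y (vscal t k)).
Proof.
  destruct Ck as [U [HU [Uk HUC]]].
  destruct (open_ray _ U k y HU Uk) as [eps [Heps Hray]].
  set (s := eps / 2).
  assert (Us : U (vadd k (vscal s y))) by (apply Hray; unfold s; rewrite Rabs_right; lra).
  exists (1 / s).
  replace (vadd y (vscal (1 / s) k)) with (vscal (1 / s) (vadd k (vscal s y)))
    by (assert (s <> 0) by (unfold s; lra); vsolve).
  apply Ccone, HUC, Us. unfold s; apply Rlt_le, Rdiv_lt_0_compat; lra.
Qed.

Definition hits A t : Prop := exists a, A a /\ C (vadd a (vscal t k)).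

Definition hit_inf A : Rbar := Rbar_inf (fun v => exists t, v = Finite t /\ hits A t).

Definition hit_sup A : Rbar :=
  Rbar_sup (fun v => exists b, A b /\ v = hit_inf (set_single b)).

Lemma hit_inf_le_hits A t : hits A t -> Rbar_le (hit_inf A) (Finite t).
Proof. intros H. apply Rbar_inf_lb; eauto. Qed.

Lemma hits_below A r : ~ Rbar_le (Finite r) (hit_inf A) -> exists t, t < r /\ hits A t.
Proof.
  intros H. destruct (Rbar_inf_lt _ _ H) as [s [[t [-> Ht]] Hlt]].
  exists t; split; auto. simpl in Hlt; lra.
Qed.

Lemma hits_up A s t : s <= t -> hits A s -> hits A t.
Proof. intros Hst [a [Aa Cs]]. exists a; split; auto. now apply shift_cone_up with s. Qed.

Lemma hits_sub A B t : set_incl A (set_sub B C) -> hits A t -> hits B t.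
Proof.
  intros HAB [a [Aa Ca]]. destruct (HAB a Aa) as [b [m [Bb [[c [Cc ->]] ->]]]].
  exists b; split; auto.
  replace (vadd b (vscal t k)) with (vadd (vadd (vadd b (vopp c)) (vscal t k)) c) by vsolve.
  now apply cone_add.
Qed.

Lemma hits_all_whole A : (forall t, hits A t) -> is_whole (set_sub A C).
Proof.
  intros Hall y. destruct (shift_cone_ex (vopp y)) as [t Cy].
  destruct (Hall (- t)) as [a [Aa Ca]].
  exists a, (vopp (vadd (vadd a (vscal (- t) k)) (vadd (vopp y) (vscal t k)))).
  repeat split; auto.
  - eexists; split; [|reflexivity]. now apply cone_add.
  - vsolve.
Qed.

Lemma hit_inf_finite A :
  (exists a, A a) -> ~ is_whole (set_sub A C) -> exists n, hit_inf A = Finite n.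
Proof.
  intros [a Aa] HA. destruct (hit_inf A) as [n| |] eqn:E; eauto; exfalso.
  - destruct (shift_cone_ex a) as [t Ct].
    assert (H := hit_inf_le_hits A t (ex_intro _ a (conj Aa Ct))).
    now rewrite E in H.
  - apply HA, hits_all_whole. intros t.
    destruct (hits_below A t) as [s [Hst Hs]]; [now rewrite E|].
    apply hits_up with s; auto; lra.
Qed.

Lemma hit_inf_single_finite A a :
  ~ is_whole (set_sub A C) -> A a -> exists p, hit_inf (set_single a) = Finite p.
Proof.
  intros HA Aa. apply hit_inf_finite; [now exists a|].
  intros Hwhole; apply HA; intros y.
  destruct (Hwhole y) as [a' [m [-> [Cm ->]]]]. now exists a, m.
Qed.

Lemma hit_sup_ge A a : A a -> Rbar_le (hit_inf (set_single a)) (hit_sup A).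
Proof. intros Aa. apply Rbar_sup_ub; eauto. Qed.

Lemma hit_inf_antitone_u A B : set_incl A (set_sub B C) -> Rbar_le (hit_inf B) (hit_inf A).
Proof.
  intros HAB. apply Rbar_inf_glb. intros v [t [-> Ht]].
  apply hit_inf_le_hits. now apply hits_sub with A.
Qed.

Lemma hit_sup_antitone_l A B : set_incl B (set_add A C) -> Rbar_le (hit_sup B) (hit_sup A).
Proof.
  intros HBA. apply Rbar_sup_lub. intros v [b [Bb ->]].
  destruct (HBA b Bb) as [a [c [Aa [Cc ->]]]].
  apply Rbar_le_trans with (hit_inf (set_single a)); [|now apply hit_sup_ge].
  apply hit_inf_antitone_u. intros a' ->.
  exists (vadd a c), (vopp c). repeat split; [now exists c|vsolve].
Qed.

Lemma hit_sup_strict_antitone_l A B :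
  ~ is_whole (set_sub A C) -> (exists b, B b) -> K_compact C B ->
  set_incl B (set_add A (set_int C)) -> Rbar_lt (hit_sup B) (hit_sup A).
Proof.
  intros HA HB HK HBA.
  destruct (K_compact_monotone_cover C B (fun t y => set_int C (vadd y (vscal t k)))
              (fun t => Rbar_lt (Finite t) (hit_sup A)) HK HB) as [T [HT HBT]].
  - intros t; apply open_translate, open_int.
  - intros s t Hst y; now apply shift_int_up.
  - intros b Bb. destruct (HBA b Bb) as [a [z [Aa [Cz ->]]]].
    destruct (hit_inf_single_finite A a HA Aa) as [p Hp].
    destruct (int_shift_neg _ C z k Cz) as [d [Hd Czd]].
    destruct (hits_below (set_single a) (p - d)) as [t [Ht [a' [-> Ct]]]];
      [rewrite Hp; simpl; lra|].
    exists (t + d); split.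
    + apply Rbar_lt_finite_le with p; [lra|]. rewrite <- Hp. now apply hit_sup_ge.
    + exists (vadd a z), vzero. repeat split; [|apply cone_zero|vsolve].
      replace (vadd (vadd a z) (vscal (t + d) k))
        with (vadd (vadd a (vscal t k)) (vadd z (vscal d k))) by vsolve.
      now apply int_cone_add.
  - apply Rbar_le_lt_trans with (Finite T); auto.
    apply Rbar_sup_lub. intros v [b [Bb ->]].
    destruct (HBT b Bb) as [u [c [Uu [Cc ->]]]].
    apply hit_inf_le_hits. exists (vadd u c); split; [reflexivity|].
    replace (vadd (vadd u c) (vscal T k)) with (vadd c (vadd u (vscal T k))) by vsolve.
    apply cone_add; auto. now apply int_incl.
Qed.

Lemma hit_inf_strict_antitone_u A B :
  (exists a, A a) -> ~ is_whole (set_sub A C) -> K_compact (set_opp C) A ->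
  set_incl A (set_sub B (set_int C)) -> Rbar_lt (hit_inf B) (hit_inf A).
Proof.
  intros HA0 HA HK HAB. destruct (hit_inf_finite A HA0 HA) as [n Hn].
  destruct (K_compact_monotone_cover (set_opp C) A
              (fun t y => exists b, B b /\ set_int C (vadd (vadd b (vopp y)) (vscal t k)))
              (fun t => t < 0) HK HA0) as [T [HT HAT]].
  - intros t. apply open_exists. intros b.
    replace (fun y => set_int C (vadd (vadd b (vopp y)) (vscal t k)))
      with (fun y => set_int C (vadd (vscal (-1) y) (vadd b (vscal t k)))).
    + apply open_preimage_affine, open_int.
    + apply functional_extensionality; intros y. f_equal. vsolve.
  - intros s t Hst y [b [Bb Hy]]. exists b; split; auto. now apply shift_int_up with s.
  - intros a Aa. destruct (HAB a Aa) as [b [m [Bb [[z [Cz ->]] ->]]]].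
    destruct (int_shift_neg _ C z k Cz) as [t [Ht Czt]].
    exists t; split; auto. exists (vadd b (vopp z)), (vopp vzero). repeat split.
    + exists b; split; auto.
      now replace (vadd (vadd b (vopp (vadd b (vopp z)))) (vscal t k)) with (vadd z (vscal t k))
        by vsolve.
    + exists vzero; split; [apply cone_zero|reflexivity].
    + vsolve.
  - destruct (hits_below A (n - T / 2)) as [s [Hs [a [Aa Cas]]]]; [rewrite Hn; simpl; lra|].
    destruct (HAT a Aa) as [u [m [[b [Bb Hbu]] [[c [Cc ->]] ->]]]].
    rewrite Hn. apply Rbar_le_lt_trans with (Finite (s + T)).
    + apply hit_inf_le_hits. exists b; split; auto.
      replace (vadd b (vscal (s + T) k)) with
        (vadd (vadd (vadd b (vopp u)) (vscal T k)) (vadd (vadd (vadd u (vopp c)) (vscal s k)) c))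
        by vsolve.
      apply cone_add; [now apply int_incl|]. now apply cone_add.
    + apply Rbar_lt_finite_le with n; [lra|apply Rbar_le_refl].
Qed.

Lemma phi_single_zero y : phi C (vopp k) (set_single vzero) y = hit_inf (set_single y).
Proof.
  unfold phi, hit_inf, hits. f_equal.
  apply functional_extensionality; intros v; apply propositional_extensionality; split.
  - intros [t [-> [a [c [-> [Cc ->]]]]]]. exists t; split; auto. eexists; split; [reflexivity|].
    now replace (vadd (vadd (vadd (vscal t (vopp k)) vzero) c) (vscal t k)) with c by vsolve.
  - intros [t [-> [a [-> Ca]]]]. exists t; split; auto.
    exists vzero, (vadd y (vscal t k)). repeat split; auto. vsolve.
Qed.

Lemma phi_opp_zero A : phi C (vopp k) (set_opp A) (vopp vzero) = hit_inf A.
Proof.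
  unfold phi, hit_inf, hits. f_equal.
  apply functional_extensionality; intros v; apply propositional_extensionality; split.
  - intros [t [-> [a' [c [[a [Aa ->]] [Cc Hc]]]]]]. exists t; split; auto. exists a; split; auto.
    replace (vadd a (vscal t k)) with c; [exact Cc|].
    rewrite (vadd_eq_sub _ _ _ _ Hc). vsolve.
  - intros [t [-> [a [Aa Ca]]]]. exists t; split; auto.
    exists (vopp a), (vadd a (vscal t k)). repeat split; auto; [now exists a|vsolve].
Qed.

Lemma v_e_hit A : v_e C (vopp k) A = (Rbar_opp (hit_sup A), Rbar_opp (hit_inf A)).
Proof.
  unfold v_e, w_e, Gu, Gl, hit_sup. f_equal.
  - do 2 f_equal.
    apply functional_extensionality; intros v; apply propositional_extensionality.
    split; intros [b [Bb ->]]; exists b; split; auto; now rewrite phi_single_zero.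
  - f_equal. apply Rbar_sup_singleton.
    + exists (vopp vzero); split; [now exists vzero|]. now rewrite phi_opp_zero.
    + intros s [b [[z [-> ->]] ->]]. now rewrite phi_opp_zero.
Qed.

End ConvexCone.

Theorem mainTheorem5 (Y : TLS) (C : Y -> Prop) (hC : good_cone C)
  (e : Y) (he : set_opp (set_int C) e) :
  (forall A B : Y -> Prop, P0 C A -> P0 C B -> set_le_s C A B ->
     pair_le (v_e C e A) (v_e C e B)) /\
  (forall A B : Y -> Prop, P0 C A -> P0 C B -> mpC_compact C A -> mpC_compact C B ->
     set_lt_s C A B -> pair_lt (v_e C e A) (v_e C e B)) /\
  (forall A B : Y -> Prop, P0 C A -> P0 C B -> s_class C B A ->
     v_e C e A = v_e C e B).
Proof.
  destruct hC as [Ccone [Cconvex _]].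
  destruct he as [k [Ck ->]].
  assert (Hmono : forall A B, set_le_s C A B -> pair_le (v_e C (vopp k) A) (v_e C (vopp k) B)).
  { intros A B [HBA HAB]. rewrite !v_e_hit. split; apply Rbar_opp_le.
    - now apply hit_sup_antitone_l.
    - now apply hit_inf_antitone_u. }
  split; [|split].
  - intros A B _ _. apply Hmono.
  - intros A B [HA0 [_ HA]] [HB0 _] [_ HAK] [HBK _] [HBA HAB].
    rewrite !v_e_hit. split; apply Rbar_opp_lt.
    + now apply hit_sup_strict_antitone_l.
    + now apply hit_inf_strict_antitone_u.
  - intros A B _ _ [HBA HAB]. apply pair_le_antisym; now apply Hmono.
Qed.
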